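(* Let $C=\{c_1,\dots,c_m\}\subset\mathbb{R}^d_{\ge 0}$ be a finite nonempty set of vectors with $\|c_j\|_2=1$, and let $v\in\mathbb{R}^d_{\ge 0}$ with $\|v\|_2=1$ and $v\in\mathrm{Cone}(C)$. Then $\max_{c\in C}v^\top c\ge d^{-1/2}$.
   Context: $\mathrm{Cone}(C)$ is the set of nonnegative linear combinations of elements of $C$. *)

From mathcomp Require Import all_boot all_order all_algebra.
Set Implicit Arguments. Unset Strict Implicit. Unset Printing Implicit Defensive.
Import Order.TTheory GRing.Theory Num.Theory.
Local Open Scope ring_scope.

Definition dotv (R : rcfType) (d : nat) (u w : 'rV[R]_d) : R :=
  \sum_(i < d) u 0 i * w 0 i.

Definition norm2 (R : rcfType) (d : nat) (u : 'rV[R]_d) : R :=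
  Num.sqrt (dotv u u).

Definition nonneg_vec (R : rcfType) (d : nat) (u : 'rV[R]_d) : Prop :=
  forall i, 0 <= u 0 i.

Definition in_cone (R : rcfType) (d m : nat) (c : 'I_m -> 'rV[R]_d)
  (v : 'rV[R]_d) : Prop :=
  exists lam : 'I_m -> R, (forall j, 0 <= lam j) /\ v = \sum_(j < m) lam j *: c j.

(* Write v = \sum_j lam_j c_j with lam_j >= 0 and let M be the largest v.c_j.
   Then 1 = v.v = \sum_j lam_j (v.c_j) <= M \sum_j lam_j.  A nonnegative unit
   vector has entries in [0, 1], so its coordinate sum 1.c_j dominates
   |c_j|^2 = 1; hence \sum_j lam_j <= \sum_j lam_j (1.c_j) = 1.v, and
   1.v <= |1| |v| = sqrt d by Cauchy-Schwarz.  Altogether 1 <= M sqrt d. *)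

From mathcomp Require Import all_boot all_order all_algebra ring lra.
Set Implicit Arguments. Unset Strict Implicit. Unset Printing Implicit Defensive.
Import Order.TTheory GRing.Theory Num.Theory.
Local Open Scope ring_scope.

Section DotProduct.
Variables (R : rcfType) (d : nat).
Implicit Types u w : 'rV[R]_d.

Lemma dotvv_ge0 u : 0 <= dotv u u.
Proof. by apply: sumr_ge0 => i _; rewrite -expr2 sqr_ge0. Qed.

Lemma dotv_ge0 u w : nonneg_vec u -> nonneg_vec w -> 0 <= dotv u w.
Proof. by move=> u_ge0 w_ge0; apply: sumr_ge0 => i _; rewrite mulr_ge0. Qed.

Lemma norm2_sqr u : norm2 u ^+ 2 = dotv u u.
Proof. exact/sqr_sqrtr/dotvv_ge0. Qed.

Lemma dotvv_eq1 u : norm2 u = 1 -> dotv u u = 1.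
Proof. by rewrite -norm2_sqr => ->; rewrite expr1n. Qed.

Lemma dotv_sumr m u (a : 'I_m -> R) (w : 'I_m -> 'rV[R]_d) :
  dotv u (\sum_(j < m) a j *: w j) = \sum_(j < m) a j * dotv u (w j).
Proof.
rewrite /dotv; under eq_bigr => i _ do rewrite summxE mulr_sumr.
rewrite exchange_big; apply: eq_bigr => j _; rewrite mulr_sumr.
by apply: eq_bigr => i _; rewrite mxE mulrCA.
Qed.

(* Lagrange's identity: 2 (|u|^2 |w|^2 - (u.w)^2) = \sum_(i,k) (u_i w_k - u_k w_i)^2. *)
Lemma dotv_CauchySchwarz u w : dotv u w ^+ 2 <= dotv u u * dotv w w.
Proof.
pose f i k := u 0 i * u 0 i * (w 0 k * w 0 k).
pose g i k := u 0 i * w 0 i * (u 0 k * w 0 k).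
have sum_f : dotv u u * dotv w w = \sum_i \sum_k f i k.
  by rewrite mulr_suml; apply: eq_bigr => i _; rewrite mulr_sumr.
have sum_g : dotv u w ^+ 2 = \sum_i \sum_k g i k.
  by rewrite expr2 mulr_suml; apply: eq_bigr => i _; rewrite mulr_sumr.
have lagrange : (dotv u u * dotv w w - dotv u w ^+ 2) *+ 2 =
    \sum_i \sum_k (u 0 i * w 0 k - u 0 k * w 0 i) ^+ 2.
  have expand i k : (u 0 i * w 0 k - u 0 k * w 0 i) ^+ 2 = f i k + f k i - g i k *+ 2.
    by rewrite /f /g; ring.
  under [RHS]eq_bigr => i _ do under eq_bigr => k _ do rewrite expand.
  under eq_bigr => i _ do rewrite sumrB big_split /=.
  rewrite sumrB big_split /= [in X in _ + X - _]exchange_big /=.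
  under [in X in _ - X]eq_bigr => i _ do rewrite sumrMnl.
  by rewrite sumrMnl -sum_f -sum_g mulrnBl mulr2n.
rewrite -subr_ge0 -(pmulrn_lge0 _ (isT : (0 < 2)%N)) lagrange.
by apply: sumr_ge0 => i _; apply: sumr_ge0 => k _; apply: sqr_ge0.
Qed.

Lemma dotv1_le_sqrt_norm2 u : dotv (const_mx 1) u <= Num.sqrt d%:R * norm2 u.
Proof.
have dot11 : dotv (const_mx 1 : 'rV[R]_d) (const_mx 1) = d%:R.
  by rewrite /dotv (eq_bigr (fun=> 1)) ?sumr_const ?card_ord // => i _; rewrite !mxE mulr1.
rewrite -sqrtrM ?ler0n // -dot11 (le_trans (ler_norm _)) // -sqrtr_sqr.
exact/ler_wsqrtr/dotv_CauchySchwarz.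
Qed.

(* Entries of u lie in [0, 1], so u_i^2 <= u_i. *)
Lemma dotvv_le_dotv1 u : nonneg_vec u -> dotv u u <= 1 -> dotv u u <= dotv (const_mx 1) u.
Proof.
move=> u_ge0 uu_le1; apply: ler_sum => i _; rewrite mxE mul1r.
have ui_le1 : u 0 i * u 0 i <= 1.
  apply: le_trans uu_le1; rewrite /dotv (bigD1 i) //= lerDl.
  by apply: sumr_ge0 => k _; rewrite -expr2 sqr_ge0.
by have := u_ge0 i; nra.
Qed.

End DotProduct.

Section ConicCombination.
Variables (R : rcfType) (d m : nat) (c : 'I_m -> 'rV[R]_d) (lam : 'I_m -> R).
Hypothesis lam_ge0 : forall j, 0 <= lam j.

Lemma dotv_conic_le u M : (forall j, dotv u (c j) <= M) ->
  dotv u (\sum_(j < m) lam j *: c j) <= M * \sum_(j < m) lam j.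
Proof.
move=> le_M; rewrite dotv_sumr mulr_sumr; apply: ler_sum => j _.
by rewrite mulrC ler_wpM2r.
Qed.

Lemma dotv_conic_ge u M : (forall j, M <= dotv u (c j)) ->
  M * \sum_(j < m) lam j <= dotv u (\sum_(j < m) lam j *: c j).
Proof.
move=> ge_M; rewrite dotv_sumr mulr_sumr; apply: ler_sum => j _.
by rewrite mulrC ler_wpM2l.
Qed.

End ConicCombination.

Theorem lemma2 (R : rcfType) (d m : nat) (c : 'I_m.+1 -> 'rV[R]_d)
  (v : 'rV[R]_d) :
  (forall j, nonneg_vec (c j)) ->
  (forall j, norm2 (c j) = 1) ->
  nonneg_vec v -> norm2 v = 1 ->
  in_cone c v ->
  \big[Num.max/dotv v (c ord0)]_(j < m.+1) dotv v (c j) >= (Num.sqrt (d%:R))^-1.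
Proof.
move=> c_ge0 c_unit v_ge0 v_unit [lam [lam_ge0 v_def]].
set M := \big[Num.max/_]_(j < m.+1) _.
have le_M j : dotv v (c j) <= M by apply: le_bigmax.
have M_ge0 : 0 <= M := le_trans (dotv_ge0 v_ge0 (c_ge0 ord0)) (le_M ord0).
have dotv1_c_ge1 j : 1 <= dotv (const_mx 1) (c j).
  by rewrite -{1}(dotvv_eq1 (c_unit j)) dotvv_le_dotv1 ?dotvv_eq1.
have sum_lam_le : \sum_(j < m.+1) lam j <= Num.sqrt d%:R.
  rewrite -[X in X <= _]mul1r (le_trans (dotv_conic_ge lam_ge0 dotv1_c_ge1)) // -v_def.
  by have := dotv1_le_sqrt_norm2 v; rewrite v_unit mulr1.
have one_le : 1 <= M * Num.sqrt d%:R.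
  rewrite -{1}(dotvv_eq1 v_unit) {2}v_def.
  by rewrite (le_trans (dotv_conic_le lam_ge0 le_M)) // ler_wpM2l.
have sqrt_gt0 : 0 < Num.sqrt (d%:R : R).
  by rewrite lt_def sqrtr_ge0 andbT; apply: contraTneq one_le => ->; rewrite mulr0 ler10.
by rewrite -div1r ler_pdivrMr.
Qed.
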